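(* Let \[ G=\begin{pmatrix}a&b\\ c&d\end{pmatrix},\qquad A=\begin{pmatrix}\alpha&\beta\\ \beta&\gamma\end{pmatrix} \quad(\alpha>0,\ \delta:=\det A=\alpha\gamma-\beta^{2}>0). \] Then there exists a symmetric matrix $S=\begin{pmatrix}s_{11}& s_{12}\\ s_{12}& s_{22}\end{pmatrix}$ satisfying \[ SG+G^TS=2SAS\quad \text{and}\quad \mathrm{trace}(G-AS)=0, \] given as follows: \begin{itemize} \item[(i)] If $\gamma b -\alpha c + \beta(a-d) =0$, then $S = A^{-1}G$, in particular \[ s_{11} = \frac{\gamma a - \beta c}{\alpha\gamma - \beta^2}, \qquad s_{12} = \frac{\gamma b - \beta d}{\alpha\gamma - \beta^2}, \qquad s_{22} = \frac{\alpha d - \beta b}{\alpha\gamma - \beta^2}. \] \item[(ii)] If $a+d=0$, then $S=0$. \item[(iii)] If $a+d \neq 0$ and $\gamma b- \alpha c + \beta(a-d) \neq 0$, then \begin{align*} s_{11} &= \frac{a+d}{ (\alpha \gamma-\beta^2) (a+d)^2 +\big( \gamma b - \alpha c + \beta(a-d)\big)^2} \Big( \gamma a(a+d) + \alpha c^2 - \gamma bc - 2\beta ac \Big), \\ s_{12} &= \frac{a+d}{ (\alpha \gamma-\beta^2) (a+d)^2 +\big( \gamma b - \alpha c + \beta(a-d)\big)^2} \Big( \alpha cd + \gamma ab - 2\beta ad \Big), \\ s_{22} &= \frac{a+d}{ (\alpha \gamma-\beta^2) (a+d)^2 +\big(\gamma b - \alpha c + \beta(a-d)\big)^2} \Big(\alpha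 d(a+d) + \gamma b^2 - \alpha bc - 2\beta bd \Big). \end{align*} \end{itemize}
   Context: All entries are real; $d=2$ dimension is implicit (here $d$ also denotes the matrix entry $g_{22}$). *)

From mathcomp Require Import all_boot all_order all_algebra.
Set Implicit Arguments. Unset Strict Implicit. Unset Printing Implicit Defensive.
Import Order.TTheory GRing.Theory Num.Theory.
Local Open Scope ring_scope.

Definition mx2 (R : nzRingType) (x11 x12 x21 x22 : R) : 'M[R]_2 :=
  \matrix_(i < 2, j < 2)
    (if i == ord0 then (if j == ord0 then x11 else x12)
     else (if j == ord0 then x21 else x22)).

Definition solves (R : comNzRingType) (S G A : 'M[R]_2) : Prop :=
  S *m G + G^T *m S = 2%:R *: (S *m A *m S) /\ \tr (G - A *m S) = 0.

From mathcomp Require Import all_boot all_order all_algebra.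
From mathcomp Require Import ring lra.
Import Order.TTheory GRing.Theory Num.Theory.
Local Open Scope ring_scope.

(* When S := A^-1 G is symmetric (for 2x2 matrices this is exactly k = 0), it
   solves the system for any symmetric invertible A: S A S = S G, and
   G^T S = G^T A^-1 G = S^T G = S G, while A S = G makes the trace vanish.  Otherwise the closed formula is checked by a
   direct field computation: its denominator delta (a+d)^2 + k^2 is positive
   because delta > 0. *)

Section Mx2.
Variable R : comNzRingType.
Implicit Types x y : R.

Lemma mx2E (M : 'M[R]_2) : M = mx2 (M 0 0) (M 0 1) (M 1 0) (M 1 1).
Proof.
apply/matrixP => -[[|[|//]] ?] [[|[|//]] ?]; rewrite !mxE /=;
  by congr (M _ _); apply: val_inj.
Qed.

Lemma trmx_mx2 x11 x12 x21 x22 : (mx2 x11 x12 x21 x22)^T = mx2 x11 x21 x12 x22.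
Proof. by rewrite [LHS]mx2E !mxE. Qed.

Lemma mulmx_mx2 x11 x12 x21 x22 y11 y12 y21 y22 :
  mx2 x11 x12 x21 x22 *m mx2 y11 y12 y21 y22 =
  mx2 (x11 * y11 + x12 * y21) (x11 * y12 + x12 * y22)
      (x21 * y11 + x22 * y21) (x21 * y12 + x22 * y22).
Proof.
by rewrite [LHS]mx2E !mxE !big_ord_recr !big_ord0 /= !add0r !mxE.
Qed.

Lemma addmx_mx2 x11 x12 x21 x22 y11 y12 y21 y22 :
  mx2 x11 x12 x21 x22 + mx2 y11 y12 y21 y22 =
  mx2 (x11 + y11) (x12 + y12) (x21 + y21) (x22 + y22).
Proof. by rewrite [LHS]mx2E !mxE. Qed.

Lemma oppmx_mx2 x11 x12 x21 x22 :
  - mx2 x11 x12 x21 x22 = mx2 (- x11) (- x12) (- x21) (- x22).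
Proof. by rewrite [LHS]mx2E !mxE. Qed.

Lemma scalemx_mx2 k x11 x12 x21 x22 :
  k *: mx2 x11 x12 x21 x22 = mx2 (k * x11) (k * x12) (k * x21) (k * x22).
Proof. by rewrite [LHS]mx2E !mxE. Qed.

Lemma scalar_mx2 x : x%:M = mx2 x 0 0 x :> 'M[R]_2.
Proof. by rewrite [LHS]mx2E !mxE. Qed.

Lemma mxtrace_mx2 x11 x12 x21 x22 : \tr (mx2 x11 x12 x21 x22) = x11 + x22.
Proof. by rewrite /mxtrace !big_ord_recr big_ord0 /= add0r !mxE. Qed.

End Mx2.

Lemma mulmx_adj_mx2 (R : comNzRingType) (p q r s : R) :
  mx2 s (- q) (- r) p *m mx2 p q r s = (p * s - q * r)%:M.
Proof. by rewrite mulmx_mx2 scalar_mx2; congr mx2; ring. Qed.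

Section Mx2Inverse.
Variables (F : fieldType) (p q r s : F).
Hypothesis det_neq0 : p * s - q * r != 0.

Lemma mulVmx_mx2 :
  ((p * s - q * r)^-1 *: mx2 s (- q) (- r) p) *m mx2 p q r s = 1%:M.
Proof. by rewrite -scalemxAl mulmx_adj_mx2 scale_scalar_mx mulVf. Qed.

Lemma unitmx_mx2 : mx2 p q r s \in unitmx.
Proof. by have [] := mulmx1_unit mulVmx_mx2. Qed.

Lemma invmx_mx2 :
  invmx (mx2 p q r s) = (p * s - q * r)^-1 *: mx2 s (- q) (- r) p.
Proof.
by rewrite -[invmx _]mulmx1 -(mulmx1C mulVmx_mx2) mulKmx ?unitmx_mx2.
Qed.

End Mx2Inverse.

Lemma solves0 (R : comNzRingType) (G A : 'M[R]_2) : \tr G = 0 -> solves 0 G A.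
Proof.
move=> trG0; split; last by rewrite mulmx0 subr0.
by rewrite mulmx0 mul0mx !mulmx0 addr0 scaler0.
Qed.

Lemma invmx_mulmx_riccati (R : comUnitRingType) n (A G : 'M[R]_n) :
  A^T = A -> A \in unitmx -> (invmx A *m G)^T = invmx A *m G ->
  let S := invmx A *m G in
  S *m G + G^T *m S = 2%:R *: (S *m A *m S) /\ \tr (G - A *m S) = 0.
Proof.
move=> symA Aunit symS S; split; last by rewrite /S mulKVmx // subrr mxtrace0.
have GtS : G^T *m S = S *m G.
  have GtAinv : G^T *m invmx A = invmx A *m G.
    by rewrite -symS trmx_mul trmx_inv symA.
  by rewrite /S mulmxA GtAinv.
by rewrite GtS scaler_nat mulr2n /S -!mulmxA mulKVmx.
Qed.

Lemma solves_explicit (F : fieldType) (a b c d alpha beta gamma : F) :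
  let delta := alpha * gamma - beta ^+ 2 in
  let k := gamma * b - alpha * c + beta * (a - d) in
  delta * (a + d) ^+ 2 + k ^+ 2 != 0 ->
  let f := (a + d) / (delta * (a + d) ^+ 2 + k ^+ 2) in
  let s11 := f * (gamma * a * (a + d) + alpha * c ^+ 2 - gamma * b * c
                  - 2%:R * beta * a * c) in
  let s12 := f * (alpha * c * d + gamma * a * b - 2%:R * beta * a * d) in
  let s22 := f * (alpha * d * (a + d) + gamma * b ^+ 2 - alpha * b * c
                  - 2%:R * beta * b * d) in
  solves (mx2 s11 s12 s12 s22) (mx2 a b c d) (mx2 alpha beta beta gamma).
Proof.
move=> delta k D_neq0 f s11 s12 s22.
rewrite /solves !(trmx_mx2, mulmx_mx2, scalemx_mx2, oppmx_mx2, addmx_mx2) mxtrace_mx2.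
rewrite /s11 /s12 /s22 /f /delta /k.
by split; [congr mx2|]; field.
Qed.

Lemma pmulr_sqr_addr_sqr_gt0 (R : realDomainType) (x y z : R) :
  0 < x -> y != 0 -> 0 < x * y ^+ 2 + z ^+ 2.
Proof.
move=> x_gt0 y_neq0; rewrite ltr_pwDl ?sqr_ge0 // mulr_gt0 //.
by rewrite exprn_even_gt0 // y_neq0 orbT.
Qed.

Theorem theorem5p5 (R : realFieldType) (a b c d alpha beta gamma : R) :
  0 < alpha -> 0 < alpha * gamma - beta ^+ 2 ->
  let G := mx2 a b c d in
  let A := mx2 alpha beta beta gamma in
  let delta := alpha * gamma - beta ^+ 2 in
  let k := gamma * b - alpha * c + beta * (a - d) in
  (exists S : 'M[R]_2, S^T = S /\ solves S G A) /\
  (k = 0 ->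
     let S := invmx A *m G in
     S = mx2 ((gamma * a - beta * c) / delta) ((gamma * b - beta * d) / delta)
             ((gamma * b - beta * d) / delta) ((alpha * d - beta * b) / delta)
     /\ S^T = S /\ solves S G A) /\
  (a + d = 0 -> solves 0 G A) /\
  (a + d != 0 -> k != 0 ->
     let f := (a + d) / (delta * (a + d) ^+ 2 + k ^+ 2) in
     let s11 := f * (gamma * a * (a + d) + alpha * c ^+ 2 - gamma * b * c
                     - 2%:R * beta * a * c) in
     let s12 := f * (alpha * c * d + gamma * a * b - 2%:R * beta * a * d) in
     let s22 := f * (alpha * d * (a + d) + gamma * b ^+ 2 - alpha * b * c
                     - 2%:R * beta * b * d) in
     solves (mx2 s11 s12 s12 s22) G A).
Proof.
move=> _ delta_gt0 G A delta k.
have detA_neq0 : alpha * gamma - beta * beta != 0 by rewrite -expr2 gt_eqF.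
have trace0 : a + d = 0 -> solves 0 G A.
  by move=> trG0; apply: solves0; rewrite mxtrace_mx2.
have explicit : a + d != 0 -> solves _ G A := fun trG_neq0 =>
  @solves_explicit _ a b c d alpha beta gamma
    (lt0r_neq0 (pmulr_sqr_addr_sqr_gt0 _ _ _ k delta_gt0 trG_neq0)).
split.
  have [/trace0|/explicit] := eqVneq (a + d) 0; first by exists 0; rewrite trmx0.
  move=> solS; eexists; split; last exact: solS.
  by rewrite trmx_mx2.
split; last by split=> // trG_neq0 _; apply: explicit.
move=> k0 S.
have S21E : alpha * c - beta * a = gamma * b - beta * d.
  by move: k0; rewrite /k => k0; lra.
have SE : S = mx2 ((gamma * a - beta * c) / delta) ((gamma * b - beta * d) / delta)
                  ((alpha * c - beta * a) / delta) ((alpha * d - beta * b) / delta).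
  rewrite /S invmx_mx2 // scalemx_mx2 mulmx_mx2 /delta expr2.
  by congr mx2; field.
rewrite S21E in SE.
split=> //; split; first by rewrite SE trmx_mx2.
apply: invmx_mulmx_riccati; first by rewrite trmx_mx2.
  exact: unitmx_mx2.
by rewrite -/S SE trmx_mx2.
Qed.
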